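(* Consider the SSBM in the context, let $\tau^+>0$, $\tau^-\ge0$, and assume $d_i^\pm>0$ for all $i\in[k]$. Let $V^\perp\in\mathbb R^{n\times(n-k)}$ have orthonormal columns spanning the orthogonal complement of the column span of $\Theta$, chosen so that exactly $n_i-1$ of its columns are supported on $C_i$ for each $i$ (these are eigenvectors of $\mathbb E D^+$), with the columns ordered cluster by cluster. Then $$\bar T=\begin{bmatrix}\Theta R& V^\perp\end{bmatrix}\begin{bmatrix}\Lambda\\&\frac{\alpha_1^+}{\alpha_1^-}I_{n_1-1}\\&&\ddots\\&&&\frac{\alpha_k^+}{\alpha_k^-}I_{n_k-1}\end{bmatrix}\begin{bmatrix}(\Theta R)^\top\\(V^\perp)^\top\end{bmatrix},$$ where $R$ is a $k\times k$ rotation matrix and $\Lambda$ a diagonal matrix such that $(C^-)^{-1/2}C^+(C^-)^{-1/2}=R\Lambda R^\top$.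
   Context: SSBM: integers $n\ge2,k\ge2$, $p\in(0,1]$, $\eta\in[0,1/2)$, partition of $[n]$ into nonempty clusters $C_1,\dots,C_k$, $|C_i|=n_i$. Independently for each pair $j\ne j'$ an edge is present w.p. $p$, signed $+1$ if same cluster and $-1$ otherwise, then flipped independently w.p. $\eta$. $A^+,A^-$ are the 0/1 adjacency matrices of positive and negative edges, $D^\pm=\mathrm{diag}(A^\pm\mathbf1)$. $\Theta_{ji}=1/\sqrt{n_i}$ if $j\in C_i$ else 0. $\overline{L^\pm_{sym}}=I-(\mathbb ED^\pm)^{-1/2}\mathbb EA^\pm(\mathbb ED^\pm)^{-1/2}$, $\bar T=(\overline{L^-_{sym}}+\tau^+I)^{-1/2}(\overline{L^+_{sym}}+\tau^-I)(\overline{L^-_{sym}}+\tau^+I)^{-1/2}$. Expected degrees of a node in $C_i$: $d_i^+=p(n(s_i(1-2\eta)+\eta)-(1-\eta))$, $d_i^-=p(n(-s_i(1-2\eta)+(1-\eta))-\eta)$ with $s_i=n_i/n$. $u^\pm=(\sqrt{n_1/d_1^\pm},\dots,\sqrt{n_k/d_k^\pm})^\top$, $\alpha_i^+=1+\tau^-+p(1-\eta)/d_i^+$, $\alpha_i^-=1+\tau^++p\eta/d_i^-$. $C^+=-p\eta u^+(u^+)^\top+\mathrm{diag}_i\big(1+\tau^-+\frac{p}{d_i^+}(1-\eta-n_i(1-2\eta))\big)$, $C^-=-p(1-\eta)u^-(u^-)^\top+\mathrm{diag}_i\big(1+\tau^++\frac p{d_i^-}(\eta+n_i(1-2\eta))\big)$.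 *)

From HB Require Import structures.
From mathcomp Require Import all_boot all_order all_algebra.
From mathcomp Require Import reals.
From Stdlib Require Import ClassicalEpsilon.
Import Order.TTheory GRing.Theory Num.Theory.
Local Open Scope ring_scope.

Section SSBM.
Context {R : realType}.

Definition psdmx {m : nat} (S : 'M[R]_m) : Prop :=
  forall v : 'cV[R]_m, 0 <= (v^T *m S *m v) 0 0.

(** Principal square root: the (unique, when it exists) symmetric PSD S with
    S * S = A; selected by classical choice. *)
Definition sqrtmx {m : nat} (A : 'M[R]_m) : 'M[R]_m :=
  epsilon (inhabits 0) (fun S : 'M[R]_m => [/\ S^T = S, psdmx S & S *m S = A]).

Definition invsqrtmx {m : nat} (A : 'M[R]_m) : 'M[R]_m := invmx (sqrtmx A).

Context {n k : nat} (c : 'I_n -> 'I_k) (p eta : R).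

Definition csize (i : 'I_k) : nat := #|[set j | c j == i]|.

(** Expected adjacency matrices (each entry is the probability of the
    corresponding signed edge; no self-loops). *)
Definition EAp : 'M[R]_n := \matrix_(j, j')
  (if j == j' then 0 else if c j == c j' then p * (1 - eta) else p * eta).
Definition EAm : 'M[R]_n := \matrix_(j, j')
  (if j == j' then 0 else if c j == c j' then p * eta else p * (1 - eta)).

Definition degmx (A : 'M[R]_n) : 'M[R]_n := diag_mx (\row_j \sum_j' A j j').
Definition EDp : 'M[R]_n := degmx EAp.
Definition EDm : 'M[R]_n := degmx EAm.

Definition Lbar (A D : 'M[R]_n) : 'M[R]_n :=
  1%:M - invsqrtmx D *m A *m invsqrtmx D.
Definition Lbarp : 'M[R]_n := Lbar EAp EDp.
Definition Lbarm : 'M[R]_n := Lbar EAm EDm.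

Definition Tbar (taup taum : R) : 'M[R]_n :=
  invsqrtmx (Lbarm + taup%:M) *m (Lbarp + taum%:M) *m invsqrtmx (Lbarm + taup%:M).

Definition Theta : 'M[R]_(n, k) := \matrix_(j, i)
  (if c j == i then (Num.sqrt (csize i)%:R)^-1 else 0).

Definition sfrac (i : 'I_k) : R := (csize i)%:R / n%:R.
Definition dp (i : 'I_k) : R :=
  p * (n%:R * (sfrac i * (1 - 2 * eta) + eta) - (1 - eta)).
Definition dm (i : 'I_k) : R :=
  p * (n%:R * (- sfrac i * (1 - 2 * eta) + (1 - eta)) - eta).

Definition up : 'cV[R]_k := \col_i Num.sqrt ((csize i)%:R / dp i).
Definition um : 'cV[R]_k := \col_i Num.sqrt ((csize i)%:R / dm i).

Definition alphap (taum : R) (i : 'I_k) : R := 1 + taum + p * (1 - eta) / dp i.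
Definition alpham (taup : R) (i : 'I_k) : R := 1 + taup + p * eta / dm i.

Definition Cp (taum : R) : 'M[R]_k :=
  - (p * eta) *: (up *m up^T)
  + diag_mx (\row_i (1 + taum + p / dp i * (1 - eta - (csize i)%:R * (1 - 2 * eta)))).
Definition Cm (taup : R) : 'M[R]_k :=
  - (p * (1 - eta)) *: (um *m um^T)
  + diag_mx (\row_i (1 + taup + p / dm i * (eta + (csize i)%:R * (1 - 2 * eta)))).

End SSBM.

From HB Require Import structures.
From mathcomp Require Import all_boot all_order all_algebra.
From mathcomp Require Import reals complex.
From mathcomp Require Import ring lra.
From Stdlib Require Import ClassicalEpsilon.
Set Implicit Arguments.
Unset Strict Implicit.
Unset Printing Implicit Defensive.
Import Order.TTheory GRing.Theory Num.Theory.
Local Open Scope ring_scope.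

(* Write M^+ = Lbar^+ + tau^- I and M^- = Lbar^- + tau^+ I.  The expected
   adjacency matrices are Z K Z^T - x I, with Z the cluster indicator matrix
   and K = (x - y) I + y J, and the expected degrees are constant on clusters.
   Hence M^+- maps the column space of Theta to itself, acting there by C^+- in
   the orthonormal basis Theta, and multiplies every column of V (orthogonal
   to Theta and supported in one cluster C_i) by alpha_i^+-.  With the
   orthogonal matrix W = [Theta V] this reads
   M^+- = W diag(C^+-, diag alpha^+-) W^T.  Principal square roots and inverses
   commute with orthogonal conjugation and with block-diagonal structure, so
   T = W diag((C^-)^(-1/2) C^+ (C^-)^(-1/2), diag(alpha^+ / alpha^-)) W^T, and
   the spectral decomposition of the first block gives the claim.  C^- is
   positive definite because C^- = tau^+ I + y (n D^-1 - u u^T), where the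
   bracket is positive semidefinite by Cauchy-Schwarz. *)

Section SumOfSquares.
Variable R : realFieldType.

Lemma cV_normsq m (v : 'cV[R]_m) : (v^T *m v) 0 0 = \sum_i v i 0 ^+ 2.
Proof. by rewrite mxE; apply: eq_bigr => i _; rewrite mxE expr2. Qed.

Lemma cV_normsq_ge0 m (v : 'cV[R]_m) : 0 <= (v^T *m v) 0 0.
Proof. by rewrite cV_normsq sumr_ge0 // => i _; apply: sqr_ge0. Qed.

Lemma cV_normsq_eq0 m (v : 'cV[R]_m) : (v^T *m v) 0 0 = 0 -> v = 0.
Proof.
rewrite cV_normsq => /eqP; rewrite psumr_eq0 => [/allP v0|i _]; last exact: sqr_ge0.
apply/matrixP => i j; rewrite ord1 mxE.
by have /= := v0 i (mem_index_enum _); rewrite sqrf_eq0 => /eqP.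
Qed.

Lemma quad_discr_le (a b c : R) : 0 <= a ->
  (forall t, 0 <= a * t ^+ 2 + 2 * b * t + c) -> b ^+ 2 <= a * c.
Proof.
move=> a_ge0 H; have [a0|a_neq0] := eqVneq a 0.
  have [->|b_neq0] := eqVneq b 0; first by rewrite expr0n a0 mul0r.
  have := H (- (c + 1) / (2 * b)); rewrite a0 mul0r add0r.
  have -> : 2 * b * (- (c + 1) / (2 * b)) + c = -1 by field.
  lra.
have a_gt0 : 0 < a by rewrite lt_def a_neq0.
have := H (- b / a).
have -> : a * (- b / a) ^+ 2 + 2 * b * (- b / a) + c = c - b ^+ 2 / a by field.
by rewrite subr_ge0 ler_pdivrMr // mulrC.
Qed.

Lemma weighted_cauchy_schwarz m (u v w : 'I_m -> R) : (forall i, 0 < w i) ->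
  (\sum_i u i * v i) ^+ 2 <= (\sum_i u i ^+ 2 / w i) * \sum_i w i * v i ^+ 2.
Proof.
move=> w_gt0; apply: quad_discr_le => [|t].
  by apply: sumr_ge0 => i _; rewrite divr_ge0 ?sqr_ge0 ?ltW.
have -> : (\sum_i u i ^+ 2 / w i) * t ^+ 2 + 2 * (\sum_i u i * v i) * t
    + \sum_i w i * v i ^+ 2 = \sum_i w i * (v i + t * u i / w i) ^+ 2.
  rewrite mulr_suml mulr_sumr mulr_suml -!big_split; apply: eq_bigr => i _ /=.
  by field; rewrite gt_eqF.
by apply: sumr_ge0 => i _; rewrite mulr_ge0 ?sqr_ge0 ?ltW.
Qed.

End SumOfSquares.

Lemma interp_poly (R : fieldType) (F : R -> R) (s : seq R) :
  exists q : {poly R}, {in s, forall x, q.[x] = F x}.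
Proof.
elim: s => [|a s [q qF]]; first by exists 0.
have [as_|nas] := boolP (a \in s).
  by exists q => x; rewrite inE => /predU1P[->|]; apply: qF.
pose r := \prod_(y <- s) ('X - y%:P).
have r0 y : y \in s -> r.[y] = 0.
  move=> ys; rewrite horner_prod; apply/eqP; rewrite prodf_seq_eq0.
  by apply/hasP; exists y => //; rewrite !hornerE subrr.
have ra : r.[a] != 0.
  rewrite horner_prod prodf_seq_neq0; apply/allP => y ys /=.
  by rewrite !hornerE subr_eq0; apply: contra nas => /eqP ->.
exists (q + ((F a - q.[a]) / r.[a]) *: r) => x; rewrite inE => /predU1P[->|xs].
  by rewrite hornerD hornerZ divfK // addrC subrK.
by rewrite hornerD hornerZ (r0 x xs) mulr0 addr0 qF.
Qed.

Lemma horner_mx_sym (R : comNzRingType) m (A : 'M[R]_m.+1) (q : {poly R}) :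
  A^T = A -> (horner_mx A q)^T = horner_mx A q.
Proof.
move=> Asym; elim/poly_ind: q => [|q a IHq]; first by rewrite rmorph0 trmx0.
rewrite rmorphD rmorphM /= horner_mx_X horner_mx_C linearD /= tr_scalar_mx.
by rewrite -mulmxE trmx_mul IHq Asym (comm_horner_mx q (comm_mx_refl A)).
Qed.

Lemma spectral_diag_eigenvalue (C : numClosedFieldType) m (A : 'M[C]_m) j :
  A \is normalmx -> eigenvalue A (spectral_diag A 0 j).
Proof.
move=> /orthomx_spectralP AE; have Pu := spectral_unit A.
set P := spectralmx A in AE Pu; set d := spectral_diag A in AE *.
apply/eigenvalueP; exists (row j P).
  have ed : (delta_mx 0 j : 'rV_m) *m diag_mx d = d 0 j *: delta_mx 0 j.
    rewrite mul_mx_diag; apply/matrixP => a b; rewrite !mxE.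
    by case: (eqVneq b j) => [->|_]; [rewrite mulrC | rewrite andbF mul0r mulr0].
  by rewrite {1}AE rowE !mulmxA mulmxK // ed -scalemxAl.
apply: contraTneq isT => /(congr1 (mulmx^~ (invmx P))).
rewrite rowE mulmxK // mul0mx => /matrixP/(_ 0 j).
by rewrite !mxE !eqxx => /eqP; rewrite oner_eq0.
Qed.

Section OrthogonalConjugation.
Variable R : comUnitRingType.
Implicit Types m p : nat.

Lemma mulmxT_orthogonal m p (W : 'M[R]_(m, p)) :
  p = m -> W^T *m W = 1%:M -> W *m W^T = 1%:M.
Proof. by move=> pm; subst m; apply: mulmx1C. Qed.

Lemma mul_block_diag m1 m2 (A A' : 'M[R]_m1) (D D' : 'M[R]_m2) :
  block_mx A 0 0 D *m block_mx A' 0 0 D' = block_mx (A *m A') 0 0 (D *m D').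
Proof. by rewrite mulmx_block !(mulmx0, mul0mx, addr0, add0r). Qed.

Lemma tr_block_diag m1 m2 (A : 'M[R]_m1) (D : 'M[R]_m2) :
  (block_mx A 0 0 D)^T = block_mx A^T 0 0 D^T.
Proof. by rewrite tr_block_mx !trmx0. Qed.

Lemma mulmx_conj m p (W : 'M[R]_(m, p)) (X Y : 'M[R]_p) : W^T *m W = 1%:M ->
  W *m X *m W^T *m (W *m Y *m W^T) = W *m (X *m Y) *m W^T.
Proof. by move=> WTW; rewrite !mulmxA -(mulmxA (W *m X)) WTW mulmx1. Qed.

Lemma trmx_conj m p (W : 'M[R]_(m, p)) (X : 'M[R]_p) : X^T = X ->
  (W *m X *m W^T)^T = W *m X *m W^T.
Proof. by move=> Xsym; rewrite !trmx_mul trmxK Xsym mulmxA. Qed.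

Lemma mulmx1_invmx m (A B : 'M[R]_m) : A *m B = 1%:M -> invmx A = B.
Proof.
move=> AB; have [Au _] := mulmx1_unit AB.
by rewrite -[invmx A]mulmx1 -AB mulKmx.
Qed.

Lemma invmx_conj m p (W : 'M[R]_(m, p)) (X : 'M[R]_p) :
  W^T *m W = 1%:M -> W *m W^T = 1%:M -> X \in unitmx ->
  invmx (W *m X *m W^T) = W *m invmx X *m W^T.
Proof.
by move=> WTW WWT Xu; apply: mulmx1_invmx; rewrite mulmx_conj // mulmxV // mulmx1.
Qed.

Lemma row_mx_conj_block_diag m p1 p2 (X : 'M[R]_(m, p1)) (Y : 'M[R]_(m, p2))
    (Q L : 'M[R]_p1) (E : 'M[R]_p2) :
  row_mx X Y *m block_mx (Q *m L *m Q^T) 0 0 E *m (row_mx X Y)^T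
  = row_mx (X *m Q) Y *m block_mx L 0 0 E *m (row_mx (X *m Q) Y)^T.
Proof.
have -> : row_mx (X *m Q) Y = row_mx X Y *m block_mx Q 0 0 1%:M.
  by rewrite mul_row_block !mulmx0 addr0 add0r mulmx1.
transitivity (row_mx X Y *m (block_mx Q 0 0 1%:M *m block_mx L 0 0 E
                             *m block_mx Q^T 0 0 1%:M) *m (row_mx X Y)^T).
  by rewrite !mul_block_diag mul1mx mulmx1.
by rewrite trmx_mul tr_block_diag trmx1 !mulmxA.
Qed.

End OrthogonalConjugation.

Lemma invmx_diag (F : fieldType) m (d : 'rV[F]_m) : (forall j, d 0 j != 0) ->
  invmx (diag_mx d) = diag_mx (\row_j (d 0 j)^-1).
Proof.
move=> d0; apply: mulmx1_invmx; rewrite mulmx_diag -diag_const_mx.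
by congr diag_mx; apply/matrixP => i j; rewrite !mxE divff.
Qed.

Lemma unitmx_diag (F : fieldType) m (d : 'rV[F]_m) : (forall j, d 0 j != 0) ->
  diag_mx d \in unitmx.
Proof. by move=> d0; rewrite unitmxE det_diag unitfE; apply/prodf_neq0 => j _. Qed.

Section PositiveSemidefinite.
Variable R : realType.
Implicit Types m : nat.

Lemma quad_form_sym m (S : 'M[R]_m) (x y : 'cV_m) : S^T = S ->
  (x^T *m S *m y) 0 0 = (y^T *m S *m x) 0 0.
Proof.
move=> Ssym; transitivity ((y^T *m S *m x)^T 0 0); last by rewrite mxE.
by rewrite !trmx_mul trmxK Ssym mulmxA.
Qed.

Lemma psdmx_mul_eq0 m (S : 'M[R]_m) (x : 'cV_m) : S^T = S -> psdmx S ->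
  (x^T *m S *m x) 0 0 = 0 -> S *m x = 0.
Proof.
move=> Ssym Spsd x0.
suff orth (y : 'cV_m) : (y^T *m S *m x) 0 0 = 0.
  by apply: cV_normsq_eq0; rewrite -(orth (S *m x)) mulmxA.
apply/eqP; rewrite -sqrf_eq0 eq_le sqr_ge0 andbT -[X in _ <= X](mulr0 ((y^T *m S *m y) 0 0)).
apply: quad_discr_le; first exact: Spsd.
move=> t; have := Spsd (x + t *: y).
rewrite [(x + _)^T]linearD /= [(t *: y)^T]linearZ /=.
rewrite !(mulmxDl, mulmxDr) -!(scalemxAl, scalemxAr).
have entryD (A B : 'M[R]_1) : (A + B) 0 0 = A 0 0 + B 0 0 by rewrite mxE.
have entryZ a (A : 'M[R]_1) : (a *: A) 0 0 = a * A 0 0 by rewrite mxE.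
rewrite !(entryD, entryZ) (quad_form_sym x y Ssym) x0.
lra.
Qed.

Lemma psdmx1 m : psdmx (1%:M : 'M[R]_m).
Proof. by move=> v; rewrite mulmx1 cV_normsq_ge0. Qed.

Lemma psdmx_diag m (d : 'rV[R]_m) : (forall j, 0 <= d 0 j) -> psdmx (diag_mx d).
Proof.
move=> d0 v; rewrite mul_mx_diag mxE sumr_ge0 // => j _; rewrite !mxE.
by rewrite mulrAC -expr2 mulr_ge0 ?sqr_ge0.
Qed.

Lemma psdmx_add m (A B : 'M[R]_m) : psdmx A -> psdmx B -> psdmx (A + B).
Proof. by move=> Apsd Bpsd v; rewrite mulmxDr mulmxDl mxE addr_ge0. Qed.

Lemma psdmx_scale m a (A : 'M[R]_m) : 0 <= a -> psdmx A -> psdmx (a *: A).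
Proof. by move=> a0 Apsd v; rewrite -scalemxAr -scalemxAl mxE mulr_ge0. Qed.

Lemma psdmx_block_diag m1 m2 (A : 'M[R]_m1) (D : 'M[R]_m2) :
  psdmx A -> psdmx D -> psdmx (block_mx A 0 0 D).
Proof.
move=> Apsd Dpsd v; rewrite -(vsubmxK v) tr_col_mx mul_row_block.
rewrite !(mulmx0, addr0, add0r) mul_row_col mxE.
by rewrite addr_ge0 ?Apsd ?Dpsd.
Qed.

Lemma psdmx_conj m p (W : 'M[R]_(m, p)) (X : 'M[R]_p) :
  psdmx X -> psdmx (W *m X *m W^T).
Proof.
move=> Xpsd v; have -> : v^T *m (W *m X *m W^T) *m v = (W^T *m v)^T *m X *m (W^T *m v).
  by rewrite trmx_mul trmxK !mulmxA.
exact: Xpsd.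
Qed.

Lemma psdmx_diag_sub_rank1 m (w : 'rV[R]_m) (u : 'cV[R]_m) :
  (forall i, 0 < w 0 i) -> \sum_i u i 0 ^+ 2 / w 0 i <= 1 ->
  psdmx (diag_mx w - u *m u^T).
Proof.
move=> w_gt0 u_le1 v.
have vDv : (v^T *m diag_mx w *m v) 0 0 = \sum_i w 0 i * v i 0 ^+ 2.
  by rewrite mul_mx_diag mxE; apply: eq_bigr => i _; rewrite !mxE mulrAC -expr2 mulrC.
have dot (a : 'cV[R]_m) : (a^T *m v) 0 0 = \sum_i a i 0 * v i 0.
  by rewrite mxE; apply: eq_bigr => i _; rewrite mxE.
have vuuv : (v^T *m (u *m u^T) *m v) 0 0 = (\sum_i u i 0 * v i 0) ^+ 2.
  rewrite mulmxA -mulmxA mxE big_ord1 -[v^T *m u]trmxK trmx_mul trmxK.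
  by rewrite [(_^T) 0 0]mxE !dot expr2.
rewrite mulmxBr mulmxBl mxE vDv mxE vuuv subr_ge0.
have := weighted_cauchy_schwarz (fun i => u i 0) (fun i => v i 0) w_gt0.
have : 0 <= \sum_i w 0 i * v i 0 ^+ 2.
  by apply: sumr_ge0 => i _; rewrite mulr_ge0 ?sqr_ge0 ?ltW.
nra.
Qed.

Lemma shift_psdmx_unit m tau (S : 'M[R]_m) : 0 < tau -> psdmx S ->
  tau%:M + S \in unitmx.
Proof.
move=> tau_gt0 Spsd; rewrite -row_free_unit -kermx_eq0; apply/eqP/row_matrixP => i.
set v := (row i (kermx (tau%:M + S)))^T.
have Sv0 : v^T *m (tau%:M + S) = 0 by rewrite trmxK -row_mul mulmx_ker row0.
have : (v^T *m (tau%:M + S) *m v) 0 0 = 0 by rewrite Sv0 mul0mx mxE.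
rewrite mulmxDr mulmxDl mul_mx_scalar -scalemxAl mxE mxE => vSv0.
have v0 : v = 0.
  apply: cV_normsq_eq0; have := Spsd v; have := cV_normsq_ge0 v; nra.
by rewrite -[row i _]trmxK -/v v0 trmx0 row0.
Qed.

Lemma psdmx_eigenvalue_ge0 m (A : 'M[R]_m) a :
  psdmx A -> eigenvalue A a -> 0 <= a.
Proof.
move=> Apsd /eigenvalueP[v vA v0].
have vv : 0 < (v^T^T *m v^T) 0 0.
  rewrite lt_def cV_normsq_ge0 andbT; apply: contra v0.
  by move=> /eqP/cV_normsq_eq0/(congr1 trmx); rewrite trmxK trmx0 => ->.
by rewrite trmxK in vv; have := Apsd v^T; rewrite trmxK vA -scalemxAl mxE pmulr_lge0.
Qed.

Lemma mxtrace_quad_form m (S D : 'M[R]_m) :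
  \tr (D^T *m S *m D) = \sum_j ((col j D)^T *m S *m col j D) 0 0.
Proof.
apply: eq_bigr => j _; rewrite !mxE; apply: eq_bigr => l _; rewrite !mxE.
by congr (_ * _); apply: eq_bigr => i _; rewrite !mxE.
Qed.

Lemma psdmx_tr_ge0 m (S D : 'M[R]_m) : psdmx S -> 0 <= \tr (D^T *m S *m D).
Proof. by move=> Spsd; rewrite mxtrace_quad_form sumr_ge0. Qed.

Lemma psdmx_tr_eq0 m (S D : 'M[R]_m) : S^T = S -> psdmx S ->
  \tr (D^T *m S *m D) = 0 -> S *m D = 0.
Proof.
move=> Ssym Spsd /eqP; rewrite mxtrace_quad_form psumr_eq0 // => /allP D0.
apply/matrixP => i j; have /eqP/(psdmx_mul_eq0 Ssym Spsd) := D0 j (mem_index_enum _).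
by rewrite colE mulmxA -colE => /matrixP/(_ i 0); rewrite !mxE.
Qed.

End PositiveSemidefinite.

Section SquareRoots.
Variable R : realType.
Implicit Types m : nat.

Lemma sqrt_psdmx_uniq m (S1 S2 : 'M[R]_m) :
  S1^T = S1 -> psdmx S1 -> S2^T = S2 -> psdmx S2 ->
  S1 *m S1 = S2 *m S2 -> S1 = S2.
Proof.
move=> S1sym S1psd S2sym S2psd S12; apply/eqP; rewrite -subr_eq0; apply/eqP.
set D := S1 - S2.
have Dsym : D^T = D by rewrite linearB /= S1sym S2sym.
have sylv : S1 *m D + D *m S2 = 0.
  by rewrite mulmxBr mulmxBl S12 addrA subrK subrr.
have tr0 : \tr (D^T *m S1 *m D) + \tr (D^T *m S2 *m D) = 0.
  rewrite Dsym [X in _ + X]mxtrace_mulC -!mulmxA -mxtraceD -mulmxDr.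
  by rewrite sylv mulmx0 mxtrace0.
have tr1 := psdmx_tr_ge0 D S1psd; have tr2 := psdmx_tr_ge0 D S2psd.
have S1D : S1 *m D = 0 by apply: psdmx_tr_eq0 => //; lra.
have S2D : S2 *m D = 0 by apply: psdmx_tr_eq0 => //; lra.
have DD : \tr (D^T *m 1%:M *m D) = 0.
  by rewrite mulmx1 {1}Dsym mulmxBl S1D S2D subrr mxtrace0.
by have := psdmx_tr_eq0 (trmx1 _ _) (@psdmx1 _ m) DD; rewrite mul1mx.
Qed.

Lemma psdmx_spectral m (A : 'M[R]_m.+1) : A^T = A -> psdmx A ->
  exists2 P : 'M[complex R]_m.+1, P \in unitmx &
  exists2 mu : 'rV[R]_m.+1, (forall j, 0 <= mu 0 j) &
    map_mx (real_complex R) A = invmx P *m diag_mx (map_mx (real_complex R) mu) *m P.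
Proof.
move=> Asym Apsd; set AC := map_mx (real_complex R) A.
have AChermit : AC \is hermsymmx.
  apply: realsym_hermsym.
    apply/is_hermitianmxP; rewrite expr0 scale1r.
    by apply/matrixP => i j; rewrite !mxE -[in RHS]Asym mxE.
  by apply/mxOverP => i j; apply/complex_realP; exists (A i j); rewrite mxE.
have ACnormal := hermitian_normalmx AChermit.
have /orthomx_spectralP ACE := ACnormal.
exists (spectralmx AC); first exact: spectral_unit.
set d := spectral_diag AC in ACE *.
have dreal j : real_complex R (complex.Re (d 0 j)) = d 0 j.
  exact/RRe_real/(mxOverP (hermitian_spectral_diag_real AChermit)).
exists (map_mx (@complex.Re R) d).
  move=> j; apply: psdmx_eigenvalue_ge0 Apsd _; rewrite mxE.
  by have := spectral_diag_eigenvalue j ACnormal; rewrite -/d -dreal eigenvalue_map.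
have -> : map_mx (real_complex R) (map_mx (@complex.Re R) d) = d.
  by apply/matrixP => a j; rewrite !mxE [a]ord1 dreal.
exact: ACE.
Qed.

Lemma sqrt_psdmx_exists m (A : 'M[R]_m) : A^T = A -> psdmx A ->
  exists S : 'M[R]_m, [/\ S^T = S, psdmx S & S *m S = A].
Proof.
case: m A => [|m] A Asym Apsd.
  exists 0; split; first by rewrite trmx0.
    by move=> v; rewrite mulmx0 mul0mx mxE.
  by apply/matrixP => -[].
have [P Pu [mu mu_ge0 AE]] := psdmx_spectral Asym Apsd.
(* T is a polynomial in A with eigenvalues mu^(1/4); then T^2 = T^T T is a
   psd square root of A. *)
have [q qE] := interp_poly (fun x => Num.sqrt (Num.sqrt x)) [seq mu 0 j | j <- enum 'I_m.+1].
pose T := horner_mx A q.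
have Tsym : T^T = T by apply: horner_mx_sym.
exists (T *m T); split.
- by rewrite trmx_mul Tsym.
- move=> v; have -> : v^T *m (T *m T) *m v = (T *m v)^T *m (T *m v).
    by rewrite trmx_mul Tsym !mulmxA.
  exact: cV_normsq_ge0.
pose e := \row_j (map_poly (real_complex R) q).[real_complex R (mu 0 j)].
have TE : map_mx (real_complex R) T = invmx P *m diag_mx e *m P.
  rewrite map_horner_mx AE (horner_mx_uconjC _ _ Pu) horner_mx_diag.
  have -> : map_mx (horner (map_poly (real_complex R) q)) (map_mx (real_complex R) mu) = e.
    by apply/matrixP => a b; rewrite [a]ord1 !mxE.
  by congr (_ *m _ *m _).
have e4 j : e 0 j ^+ 4 = real_complex R (mu 0 j).
  rewrite mxE horner_map /= qE; last by apply: map_f; rewrite mem_enum.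
  by rewrite -rmorphXn /= (_ : 4 = 2 * 2)%N // exprM !sqr_sqrtr ?sqrtr_ge0.
have e4d : diag_mx e *m diag_mx e *m (diag_mx e *m diag_mx e)
           = diag_mx (map_mx (real_complex R) mu).
  clearbody e; rewrite !mulmx_diag; congr diag_mx; apply/matrixP => a b.
  by rewrite !mxE [a]ord1 -e4 !exprS expr0 mulr1 !mulrA.
have conjM X Y : invmx P *m X *m P *m (invmx P *m Y *m P) = invmx P *m (X *m Y) *m P.
  by rewrite !mulmxA mulmxK // !mulmxA.
apply: (map_mx_inj (f := real_complex R)).
by rewrite !map_mxM TE !conjM e4d -AE.
Qed.

Lemma sqrtmx_spec m (A : 'M[R]_m) : A^T = A -> psdmx A ->
  [/\ (sqrtmx A)^T = sqrtmx A, psdmx (sqrtmx A) & sqrtmx A *m sqrtmx A = A].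
Proof.
move=> Asym Apsd.
exact: (epsilon_spec (inhabits 0) _ (sqrt_psdmx_exists Asym Apsd)).
Qed.

Lemma sqrtmx_uniq m (A S : 'M[R]_m) :
  S^T = S -> psdmx S -> S *m S = A -> sqrtmx A = S.
Proof.
move=> Ssym Spsd SSA.
have [] := @epsilon_spec _ (inhabits 0) (fun S => [/\ S^T = S, psdmx S & S *m S = A]).
  by exists S.
by move=> Tsym Tpsd TTA; apply: sqrt_psdmx_uniq => //; rewrite TTA.
Qed.

Lemma sqrtmx_diag m (d : 'rV[R]_m) : (forall j, 0 <= d 0 j) ->
  sqrtmx (diag_mx d) = diag_mx (\row_j Num.sqrt (d 0 j)).
Proof.
move=> d0; apply: sqrtmx_uniq; first by rewrite tr_diag_mx.
  by apply: psdmx_diag => j; rewrite mxE sqrtr_ge0.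
rewrite mulmx_diag; congr diag_mx; apply/matrixP => a b.
by rewrite [a]ord1 !mxE -expr2 sqr_sqrtr.
Qed.

Lemma sqrtmx_block_diag m1 m2 (A : 'M[R]_m1) (D : 'M[R]_m2) :
  A^T = A -> psdmx A -> D^T = D -> psdmx D ->
  sqrtmx (block_mx A 0 0 D) = block_mx (sqrtmx A) 0 0 (sqrtmx D).
Proof.
move=> Asym Apsd Dsym Dpsd.
have [SAsym SApsd SAA] := sqrtmx_spec Asym Apsd.
have [SDsym SDpsd SDD] := sqrtmx_spec Dsym Dpsd.
apply: sqrtmx_uniq; first by rewrite tr_block_diag SAsym SDsym.
  exact: psdmx_block_diag.
by rewrite mul_block_diag SAA SDD.
Qed.

Lemma sqrtmx_conj m p (W : 'M[R]_(m, p)) (X : 'M[R]_p) :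
  W^T *m W = 1%:M -> X^T = X -> psdmx X ->
  sqrtmx (W *m X *m W^T) = W *m sqrtmx X *m W^T.
Proof.
move=> WTW Xsym Xpsd; have [SXsym SXpsd SXX] := sqrtmx_spec Xsym Xpsd.
apply: sqrtmx_uniq; first exact: trmx_conj.
  exact: psdmx_conj.
by rewrite mulmx_conj // SXX.
Qed.

Lemma sqrtmx_unit m (A : 'M[R]_m) : A^T = A -> psdmx A -> A \in unitmx ->
  sqrtmx A \in unitmx.
Proof.
move=> Asym Apsd; have [_ _ SSA] := sqrtmx_spec Asym Apsd.
by rewrite -{1}SSA unitmx_mul => /andP[].
Qed.

Lemma invsqrtmx_diag m (d : 'rV[R]_m) : (forall j, 0 < d 0 j) ->
  invsqrtmx (diag_mx d) = diag_mx (\row_j (Num.sqrt (d 0 j))^-1).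
Proof.
move=> d_gt0; rewrite /invsqrtmx sqrtmx_diag => [|j]; last exact: ltW.
rewrite invmx_diag => [|j]; last by rewrite mxE sqrtr_eq0 -ltNge.
by congr diag_mx; apply/matrixP => i j; rewrite !mxE.
Qed.

Lemma invsqrtmx_conj_block m p1 p2 (W : 'M[R]_(m, p1 + p2)) (A : 'M[R]_p1) (D : 'M[R]_p2) :
  W^T *m W = 1%:M -> W *m W^T = 1%:M ->
  A^T = A -> psdmx A -> A \in unitmx -> D^T = D -> psdmx D -> D \in unitmx ->
  invsqrtmx (W *m block_mx A 0 0 D *m W^T)
  = W *m block_mx (invsqrtmx A) 0 0 (invsqrtmx D) *m W^T.
Proof.
move=> WTW WWT Asym Apsd Au Dsym Dpsd Du.
have ADsym : (block_mx A 0 0 D)^T = block_mx A 0 0 D by rewrite tr_block_diag Asym Dsym.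
have Bu : block_mx (sqrtmx A) 0 0 (sqrtmx D) \in unitmx.
  by rewrite block_diag_mx_unit !sqrtmx_unit.
rewrite /invsqrtmx (sqrtmx_conj WTW ADsym (psdmx_block_diag Apsd Dpsd)).
by rewrite sqrtmx_block_diag // invmx_conj // invmx_block_diag.
Qed.

Lemma invsqrtmx_diag_sandwich m (a b : 'I_m -> R) : (forall j, 0 < a j) ->
  invsqrtmx (diag_mx (\row_j a j)) *m diag_mx (\row_j b j) *m invsqrtmx (diag_mx (\row_j a j))
  = diag_mx (\row_j (b j / a j)).
Proof.
move=> a_gt0; rewrite invsqrtmx_diag => [|j]; last by rewrite mxE.
rewrite !mulmx_diag; congr diag_mx; apply/matrixP => i j; rewrite !mxE.
have sqrt_neq0 : Num.sqrt (a j) != 0 by rewrite sqrtr_eq0 -ltNge.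
move: (sqr_sqrtr (ltW (a_gt0 j))) sqrt_neq0; move: (Num.sqrt (a j)) => s <- s_neq0.
by field.
Qed.

Lemma invsqrtmx_sandwich_block m p1 p2 (W : 'M[R]_(m, p1 + p2))
    (A B : 'M[R]_p1) (D E : 'M[R]_p2) :
  W^T *m W = 1%:M -> W *m W^T = 1%:M ->
  A^T = A -> psdmx A -> A \in unitmx -> D^T = D -> psdmx D -> D \in unitmx ->
  invsqrtmx (W *m block_mx A 0 0 D *m W^T) *m (W *m block_mx B 0 0 E *m W^T)
    *m invsqrtmx (W *m block_mx A 0 0 D *m W^T)
  = W *m block_mx (invsqrtmx A *m B *m invsqrtmx A) 0 0
                  (invsqrtmx D *m E *m invsqrtmx D) *m W^T.
Proof.
by move=> WTW WWT *; rewrite invsqrtmx_conj_block // !mulmx_conj // !mul_block_diag.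
Qed.

End SquareRoots.

Section Clusters.
Context {R : realType} {n k : nat} (c : 'I_n -> 'I_k).
Hypothesis c_surj : forall i, exists j, c j = i.

Definition clustermx : 'M[R]_(n, k) := \matrix_(j, i) (c j == i)%:R.

Lemma sum_indicator (f : 'I_k -> R) j : \sum_i (c j == i)%:R * f i = f (c j).
Proof.
rewrite (bigD1 (c j)) //= eqxx mul1r big1 ?addr0 // => i ci.
by rewrite eq_sym (negbTE ci) mul0r.
Qed.

Lemma csizeE i : ((csize c i)%:R : R) = \sum_j (c j == i)%:R.
Proof.
rewrite /csize -sum1_card big_mkcond /= natr_sum; apply: eq_bigr => j _.
by rewrite inE; case: (c j == i).
Qed.

Lemma sum_by_cluster (f : 'I_k -> R) :
  \sum_j f (c j) = \sum_i (csize c i)%:R * f i.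
Proof.
under eq_bigr => j _ do rewrite -(sum_indicator f j).
by rewrite exchange_big; apply: eq_bigr => i _; rewrite csizeE mulr_suml.
Qed.

Lemma sum_csize : \sum_i ((csize c i)%:R : R) = n%:R.
Proof.
have := sum_by_cluster (fun _ => 1); rewrite sumr_const card_ord => ->.
by apply: eq_bigr => i _; rewrite mulr1.
Qed.

Lemma csize_gt0 i : (0 < csize c i)%N.
Proof.
by have [j cj] := c_surj i; rewrite card_gt0; apply/set0Pn; exists j; rewrite inE cj.
Qed.

Lemma card_clusters_le : (k <= n)%N.
Proof.
rewrite -[k]card_ord -[n]card_ord -!sum1_card (partition_big c predT) //=.
apply: leq_sum => i _; have [j cj] := c_surj i.
by rewrite (bigD1 j) ?cj //= leq_addr.
Qed.

Lemma clustermx_gram : clustermx^T *m clustermx = diag_mx (\row_i ((csize c i)%:R : R)).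
Proof.
apply/matrixP => a b; rewrite !mxE csizeE; under eq_bigr => j _ do rewrite !mxE.
case: (eqVneq a b) => [<-|ab]; rewrite ?mulr1n ?mulr0n.
  by apply: eq_bigr => j _; case: (c j == a); rewrite ?mulr1 ?mulr0.
apply: big1 => j _; case: (eqVneq (c j) a) => [->|_]; last by rewrite mul0r.
by rewrite (negbTE ab) mulr0.
Qed.

Lemma diag_clustermx (s : 'I_k -> R) :
  diag_mx (\row_j s (c j)) *m clustermx = clustermx *m diag_mx (\row_i s i).
Proof.
rewrite mul_diag_mx mul_mx_diag; apply/matrixP => a b; rewrite !mxE.
by case: (eqVneq (c a) b) => [->|_]; rewrite ?mulr1 ?mul1r ?mulr0 ?mul0r.
Qed.

Lemma clustermx_conjE (K : 'M[R]_k) j j' :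
  (clustermx *m K *m clustermx^T) j j' = K (c j) (c j').
Proof.
rewrite /clustermx mxE; under eq_bigr => a _ do rewrite !mxE.
under eq_bigr => a _ do under eq_bigr => b _ do rewrite mxE.
under eq_bigr => a _ do rewrite (sum_indicator (fun b => K b a)) mulrC.
exact: sum_indicator.
Qed.

Lemma ThetaE : Theta c = clustermx *m diag_mx (\row_i (Num.sqrt (csize c i)%:R)^-1).
Proof.
rewrite mul_mx_diag; apply/matrixP => a b; rewrite !mxE.
by case: (c a == b); rewrite ?mul1r ?mul0r.
Qed.

Lemma clustermx_Theta :
  clustermx = Theta c *m diag_mx (\row_i Num.sqrt ((csize c i)%:R : R)).
Proof.
rewrite ThetaE -mulmxA mulmx_diag -[LHS]mulmx1 -diag_const_mx.
congr (_ *m diag_mx _); apply/matrixP => a i; rewrite !mxE mulVf //.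
by rewrite sqrtr_eq0 -ltNge ltr0n csize_gt0.
Qed.

Lemma Theta_orthonormal : (Theta c)^T *m Theta c = 1%:M :> 'M[R]_k.
Proof.
rewrite ThetaE trmx_mul tr_diag_mx -mulmxA (mulmxA clustermx^T).
rewrite clustermx_gram !mulmx_diag -diag_const_mx; congr diag_mx.
apply/matrixP => a i; rewrite !mxE.
have n_gt0 : 0 < ((csize c i)%:R : R) by rewrite ltr0n csize_gt0.
have s0 : Num.sqrt ((csize c i)%:R : R) != 0 by rewrite sqrtr_eq0 -ltNge.
by rewrite -{2}(sqr_sqrtr (ltW n_gt0)); field.
Qed.

End Clusters.

Section BlockModel.
Context {R : realType} {n k : nat} (c : 'I_n -> 'I_k) (x y : R).

(* [EAp c p eta] and [EAm c p eta] are convertible to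
   [blockadj c (p * (1 - eta)) (p * eta)] and [blockadj c (p * eta) (p * (1 - eta))]. *)
Definition blockadj : 'M[R]_n :=
  \matrix_(j, j') (if j == j' then 0 else if c j == c j' then x else y).
Definition blockprob : 'M[R]_k := (x - y) *: 1%:M + y *: const_mx 1.
Definition blockdeg (i : 'I_k) : R :=
  ((csize c i)%:R - 1) * x + (n%:R - (csize c i)%:R) * y.

Lemma blockadjE : blockadj = clustermx c *m blockprob *m (clustermx c)^T - x%:M.
Proof.
apply/matrixP => j j'; rewrite 2!mxE clustermx_conjE !mxE.
case: (eqVneq j j') => [<-|_]; rewrite ?eqxx /=; first ring.
by case: (c j == c j'); rewrite /=; ring.
Qed.

Lemma blockadj_rowsum j : \sum_j' blockadj j j' = blockdeg (c j).
Proof.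
rewrite blockadjE; under eq_bigr => j' _ do rewrite mxE clustermx_conjE !mxE.
rewrite sumrB (sum_by_cluster c (fun i => (x - y) * (c j == i)%:R + y * 1)).
have -> : \sum_j' x *+ (j == j') = x.
  by rewrite (bigD1 j) //= eqxx big1 ?addr0 // => j' /negbTE; rewrite eq_sym => ->.
under eq_bigr => i _ do rewrite mulrDr mulr1 mulrCA mulrC.
rewrite big_split /= -!mulr_suml sum_csize.
under eq_bigr => i _ do rewrite mulrC.
rewrite sum_indicator /blockdeg.
ring.
Qed.

End BlockModel.

Section BlockLaplacian.
Context {R : realType} {n k : nat} (c : 'I_n -> 'I_k) (x y : R).
Hypothesis c_surj : forall i, exists j, c j = i.
Hypothesis blockdeg_gt0 : forall i, 0 < blockdeg c x y i.

Let A := blockadj c x y.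
Let Dh : 'M[R]_n := diag_mx (\row_j (Num.sqrt (blockdeg c x y (c j)))^-1).

Definition clusteru : 'cV[R]_k := \col_i Num.sqrt ((csize c i)%:R / blockdeg c x y i).
Definition clusterC (tau : R) : 'M[R]_k :=
  - y *: (clusteru *m clusteru^T)
  + diag_mx (\row_i (1 + tau + (x - (csize c i)%:R * (x - y)) / blockdeg c x y i)).
Definition clusteralpha (tau : R) (i : 'I_k) : R := 1 + tau + x / blockdeg c x y i.

Lemma invsqrtmx_blockdeg : invsqrtmx (degmx A) = Dh.
Proof.
have -> : degmx A = diag_mx (\row_j blockdeg c x y (c j)).
  by congr diag_mx; apply/matrixP => a j; rewrite !mxE blockadj_rowsum.
rewrite invsqrtmx_diag => [|j]; last by rewrite mxE.
by congr diag_mx; apply/matrixP => a j; rewrite !mxE.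
Qed.

Lemma Lbar_blockE tau : Lbar A (degmx A) + tau%:M = (1 + tau)%:M + x *: (Dh *m Dh)
  - Dh *m clustermx c *m blockprob x y *m (clustermx c)^T *m Dh.
Proof.
rewrite /Lbar invsqrtmx_blockdeg /A blockadjE mulmxBr mulmxBl mul_mx_scalar.
rewrite -scalemxAl !mulmxA.
by rewrite [(1 + tau)%:M]raddfD /= opprB addrAC addrA.
Qed.

Lemma Lbar_block_Theta tau :
  (Lbar A (degmx A) + tau%:M) *m Theta c = Theta c *m clusterC tau.
Proof.
rewrite Lbar_blockE ThetaE.
set S := diag_mx (\row_i (Num.sqrt (blockdeg c x y i))^-1) : 'M[R]_k.
have DhZ p (Y : 'M[R]_(k, p)) : Dh *m (clustermx c *m Y) = clustermx c *m (S *m Y).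
  by rewrite mulmxA /Dh (diag_clustermx c (fun i => (Num.sqrt (blockdeg c x y i))^-1)) -mulmxA.
have ZtZ p (Y : 'M[R]_(k, p)) :
    (clustermx c)^T *m (clustermx c *m Y) = diag_mx (\row_i ((csize c i)%:R : R)) *m Y.
  by rewrite mulmxA clustermx_gram.
rewrite !mulmxDl mulNmx mul_scalar_mx -scalemxAl -!mulmxA !(DhZ, ZtZ).
rewrite !scalemxAr -mulmxN -!mulmxDr; congr (_ *m _).
rewrite /S /clusterC -!scalemxAr !mulmx_diag mul_mx_diag !mul_diag_mx.
apply/matrixP => a b; rewrite !mxE big_ord1 !mxE.
have n_ge0 i : 0 <= ((csize c i)%:R : R) by [].
have d_ge0 i : 0 <= blockdeg c x y i by apply: ltW.
rewrite !sqrtrM ?sqrtrV //.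
have sqr_sn i : Num.sqrt ((csize c i)%:R : R) ^+ 2 = (csize c i)%:R by rewrite sqr_sqrtr.
have sqr_sd i : Num.sqrt (blockdeg c x y i) ^+ 2 = blockdeg c x y i by rewrite sqr_sqrtr.
have sn0 i : Num.sqrt ((csize c i)%:R : R) != 0.
  by rewrite sqrtr_eq0 -ltNge ltr0n csize_gt0.
have sd0 i : Num.sqrt (blockdeg c x y i) != 0 by rewrite sqrtr_eq0 -ltNge.
move: (sqr_sn a) (sqr_sd a) (sn0 a) (sd0 a) (sqr_sn b) (sqr_sd b) (sn0 b) (sd0 b).
case: (eqVneq a b) => [<-|_]; rewrite ?mulr1n ?mulr0n.
  move: (Num.sqrt ((csize c a)%:R : R)) (Num.sqrt (blockdeg c x y a)).
  by move=> sa sda <- <- sa0 sda0 _ _ _ _; field; rewrite sa0 sda0.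
move: (Num.sqrt ((csize c a)%:R : R)) (Num.sqrt (blockdeg c x y a)) => sa sda _ _ sa0 sda0.
move: (Num.sqrt ((csize c b)%:R : R)) (Num.sqrt (blockdeg c x y b)) => sb sdb <- _ sb0 sdb0.
by field; rewrite sa0 sda0 sb0 sdb0.
Qed.

Lemma Lbar_block_V tau m (V : 'M[R]_(n, m)) (g : 'I_m -> 'I_k) :
  (forall j l, V j l != 0 -> c j = g l) -> (Theta c)^T *m V = 0 ->
  (Lbar A (degmx A) + tau%:M) *m V = V *m diag_mx (\row_l clusteralpha tau (g l)).
Proof.
move=> Vsupp ThetaV.
have ZV : (clustermx c)^T *m V = 0.
  by rewrite (clustermx_Theta c_surj) trmx_mul -mulmxA ThetaV mulmx0.
have diagV (f : 'I_k -> R) : diag_mx (\row_j f (c j)) *m V = V *m diag_mx (\row_l f (g l)).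
  rewrite mul_diag_mx mul_mx_diag; apply/matrixP => j l; rewrite !mxE.
  by have [->|/Vsupp->] := eqVneq (V j l) 0; rewrite ?mulr0 ?mul0r // mulrC.
have DhV : Dh *m V = V *m diag_mx (\row_l (Num.sqrt (blockdeg c x y (g l)))^-1).
  exact: (diagV (fun i => (Num.sqrt (blockdeg c x y i))^-1)).
rewrite Lbar_blockE !mulmxDl mulNmx mul_scalar_mx -scalemxAl -!mulmxA.
rewrite DhV (mulmxA (clustermx c)^T) ZV mul0mx !mulmx0 oppr0 addr0.
rewrite mulmxA DhV -mulmxA -mul_mx_scalar scalemxAr -mulmxDr; congr (_ *m _).
rewrite mulmx_diag; apply/matrixP => a b; rewrite !mxE.
case: (a == b); rewrite ?mulr0n ?mulr0 ?addr0 // !mulr1n -expr2 exprVn sqr_sqrtr //.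
exact: ltW.
Qed.

Lemma Lbar_block_conj tau m (V : 'M[R]_(n, m)) (g : 'I_m -> 'I_k) :
  (forall j l, V j l != 0 -> c j = g l) -> (Theta c)^T *m V = 0 ->
  row_mx (Theta c) V *m (row_mx (Theta c) V)^T = 1%:M ->
  Lbar A (degmx A) + tau%:M = row_mx (Theta c) V
    *m block_mx (clusterC tau) 0 0 (diag_mx (\row_l clusteralpha tau (g l)))
    *m (row_mx (Theta c) V)^T.
Proof.
move=> Vsupp ThetaV WWT; rewrite -[LHS]mulmx1 -WWT mulmxA mul_mx_row.
rewrite Lbar_block_Theta (Lbar_block_V _ Vsupp ThetaV).
by rewrite mul_row_block !mulmx0 addr0 add0r.
Qed.

Lemma clusterC_shiftE tau : clusterC tau =
  tau%:M + y *: (diag_mx (\row_i (n%:R / blockdeg c x y i)) - clusteru *m clusteru^T).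
Proof.
apply/matrixP => a b; rewrite !mxE; case: (eqVneq a b) => [<-|_]; last first.
  by rewrite !mulr0n; ring.
have := blockdeg_gt0 a; rewrite !mulr1n /blockdeg => d_gt0.
by field; rewrite gt_eqF.
Qed.

Lemma clusterC_sym tau : (clusterC tau)^T = clusterC tau.
Proof.
by rewrite /clusterC linearD linearZ /= trmx_mul trmxK tr_diag_mx.
Qed.

Lemma clusterC_psd_unit tau : 0 <= y -> 0 < tau ->
  psdmx (clusterC tau) /\ clusterC tau \in unitmx.
Proof.
move=> y_ge0 tau_gt0.
have n_gt0 (i : 'I_k) : (0 < n)%N.
  by have [j _] := c_surj i; exact: leq_ltn_trans (leq0n j) (ltn_ord j).
have rank1 : psdmx (diag_mx (\row_i (n%:R / blockdeg c x y i)) - clusteru *m clusteru^T).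
  apply: psdmx_diag_sub_rank1 => [i|].
    by rewrite mxE; apply: divr_gt0; rewrite ?ltr0n ?n_gt0.
  have -> : \sum_i clusteru i 0 ^+ 2 / (\row_i (n%:R / blockdeg c x y i)) 0 i
      = \sum_i (csize c i)%:R / n%:R.
    apply: eq_bigr => i _; have d_gt0 := blockdeg_gt0 i.
    have n_gt0' : 0 < n%:R :> R by rewrite ltr0n (n_gt0 i).
    have u2 : clusteru i 0 ^+ 2 = (csize c i)%:R / blockdeg c x y i.
      by rewrite mxE sqr_sqrtr // divr_ge0 // ltW.
    by rewrite u2 mxE; field; rewrite !gt_eqF.
  rewrite -mulr_suml sum_csize.
  have [->|n0] := eqVneq (n%:R : R) 0; first by rewrite mul0r ler01.
  by rewrite divff.
have := psdmx_scale y_ge0 rank1; rewrite clusterC_shiftE => yrank1.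
split; last exact: shift_psdmx_unit.
apply: psdmx_add yrank1; rewrite -scalemx1.
exact: psdmx_scale (ltW tau_gt0) (@psdmx1 _ k).
Qed.

End BlockLaplacian.

Section SSBM.
Context {R : realType} {n k : nat} {c : 'I_n -> 'I_k} {p eta : R}.
Hypotheses (n_gt0 : (0 < n)%N) (c_surj : forall i, exists j, c j = i).
Hypotheses (dp_gt0 : forall i, 0 < dp c p eta i) (dm_gt0 : forall i, 0 < dm c p eta i).

Lemma dp_blockdeg : dp c p eta =1 blockdeg c (p * (1 - eta)) (p * eta).
Proof.
have n_neq0 : n%:R != 0 :> R by rewrite pnatr_eq0 -lt0n.
by move=> i; rewrite /dp /sfrac /blockdeg; field.
Qed.

Lemma dm_blockdeg : dm c p eta =1 blockdeg c (p * eta) (p * (1 - eta)).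
Proof.
have n_neq0 : n%:R != 0 :> R by rewrite pnatr_eq0 -lt0n.
by move=> i; rewrite /dm /sfrac /blockdeg; field.
Qed.

Lemma Cp_clusterC taum : Cp c p eta taum = clusterC c (p * (1 - eta)) (p * eta) taum.
Proof.
rewrite /Cp; have -> : up c p eta = clusteru c (p * (1 - eta)) (p * eta).
  by apply/matrixP => i j; rewrite !mxE dp_blockdeg.
congr (_ + diag_mx _); apply/matrixP => a i; rewrite !mxE dp_blockdeg.
ring.
Qed.

Lemma Cm_clusterC taup : Cm c p eta taup = clusterC c (p * eta) (p * (1 - eta)) taup.
Proof.
rewrite /Cm; have -> : um c p eta = clusteru c (p * eta) (p * (1 - eta)).
  by apply/matrixP => i j; rewrite !mxE dm_blockdeg.
congr (_ + diag_mx _); apply/matrixP => a i; rewrite !mxE dm_blockdeg.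
ring.
Qed.

Lemma Cm_sym taup : (Cm c p eta taup)^T = Cm c p eta taup.
Proof. by rewrite Cm_clusterC clusterC_sym. Qed.

Lemma Cm_psd_unit taup : 0 <= p * (1 - eta) -> 0 < taup ->
  psdmx (Cm c p eta taup) /\ Cm c p eta taup \in unitmx.
Proof.
move=> y_ge0 taup_gt0; rewrite Cm_clusterC.
by apply: clusterC_psd_unit => // i; rewrite -dm_blockdeg.
Qed.

Lemma alpham_gt0 taup : 0 <= p * eta -> 0 <= taup -> forall i, 0 < alpham c p eta taup i.
Proof.
move=> x_ge0 taup_ge0 i; have := divr_ge0 x_ge0 (ltW (dm_gt0 i)).
rewrite /alpham; lra.
Qed.

Variables (V : 'M[R]_(n, n - k)) (g : 'I_(n - k) -> 'I_k).
Hypotheses (V_orthonormal : V^T *m V = 1%:M) (V_ker : (V^T == kermx (Theta c))%MS).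
Hypothesis V_supp : forall j l, V j l != 0 -> c j = g l.

Lemma Theta_V_orthogonal : (Theta c)^T *m V = 0.
Proof.
by have /andP[/sub_kermxP VTheta _] := V_ker; rewrite -[V]trmxK -trmx_mul VTheta trmx0.
Qed.

Lemma Theta_V_orthonormal :
  (row_mx (Theta c) V)^T *m row_mx (Theta c) V = 1%:M
  /\ row_mx (Theta c) V *m (row_mx (Theta c) V)^T = 1%:M.
Proof.
have /andP[/sub_kermxP VTheta _] := V_ker.
have WTW : (row_mx (Theta c) V)^T *m row_mx (Theta c) V = 1%:M.
  rewrite tr_row_mx mul_col_row Theta_orthonormal // Theta_V_orthogonal VTheta.
  by rewrite V_orthonormal -scalar_mx_block.
by split; last by apply: mulmxT_orthogonal WTW; rewrite subnKC // (card_clusters_le c_surj).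
Qed.

Lemma Lbarp_conj taum : Lbarp c p eta + taum%:M =
  row_mx (Theta c) V *m block_mx (Cp c p eta taum) 0 0
    (diag_mx (\row_l alphap c p eta taum (g l))) *m (row_mx (Theta c) V)^T.
Proof.
have -> : \row_l alphap c p eta taum (g l)
          = \row_l clusteralpha c (p * (1 - eta)) (p * eta) taum (g l).
  by apply/matrixP => i l; rewrite !mxE /alphap dp_blockdeg.
rewrite Cp_clusterC; apply: Lbar_block_conj => //; last by case: Theta_V_orthonormal.
  by move=> i; rewrite -dp_blockdeg.
exact: Theta_V_orthogonal.
Qed.

Lemma Lbarm_conj taup : Lbarm c p eta + taup%:M =
  row_mx (Theta c) V *m block_mx (Cm c p eta taup) 0 0
    (diag_mx (\row_l alpham c p eta taup (g l))) *m (row_mx (Theta c) V)^T.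
Proof.
have -> : \row_l alpham c p eta taup (g l)
          = \row_l clusteralpha c (p * eta) (p * (1 - eta)) taup (g l).
  by apply/matrixP => i l; rewrite !mxE /alpham dm_blockdeg.
rewrite Cm_clusterC; apply: Lbar_block_conj => //; last by case: Theta_V_orthonormal.
  by move=> i; rewrite -dm_blockdeg.
exact: Theta_V_orthogonal.
Qed.

End SSBM.

Theorem mainTheorem9 (R : realType) (n k : nat) (c : 'I_n -> 'I_k)
  (p eta taup taum : R)
  (hn : (2 <= n)%N) (hk : (2 <= k)%N)
  (hp0 : 0 < p) (hp1 : p <= 1) (he0 : 0 <= eta) (he1 : eta < 1 / 2)
  (hc : forall i : 'I_k, exists j : 'I_n, c j = i)
  (htp : 0 < taup) (htm : 0 <= taum)
  (hdp : forall i : 'I_k, 0 < dp c p eta i)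
  (hdm : forall i : 'I_k, 0 < dm c p eta i)
  (V : 'M[R]_(n, n - k)) (g : 'I_(n - k) -> 'I_k)
  (hVorth : V^T *m V = 1%:M)
  (hVspan : (V^T == kermx (Theta c))%MS)
  (hVsupp : forall (j : 'I_n) (l : 'I_(n - k)), V j l != 0 -> c j = g l)
  (hgcount : forall i : 'I_k, #|[set l | g l == i]| = (csize c i).-1)
  (hgord : forall l l' : 'I_(n - k), (l <= l')%N -> (g l <= g l')%N)
  (Rot : 'M[R]_k) (lam : 'rV[R]_k)
  (hRorth : Rot^T *m Rot = 1%:M) (hRdet : \det Rot = 1)
  (hdec : invsqrtmx (Cm c p eta taup) *m Cp c p eta taum *m invsqrtmx (Cm c p eta taup)
          = Rot *m diag_mx lam *m Rot^T) :
  Tbar c p eta taup taum =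
  row_mx (Theta c *m Rot) V
  *m block_mx (diag_mx lam) 0 0
       (diag_mx (\row_l (alphap c p eta taum (g l) / alpham c p eta taup (g l))))
  *m (row_mx (Theta c *m Rot) V)^T.
Proof.
have n_gt0 : (0 < n)%N by apply: ltn_trans hn.
have [WTW WWT] := Theta_V_orthonormal hc hVorth hVspan.
have [Cm_psd Cm_unit] : psdmx (Cm c p eta taup) /\ Cm c p eta taup \in unitmx.
  by apply: Cm_psd_unit => //; apply: mulr_ge0; lra.
have am_gt0 := alpham_gt0 hdm (mulr_ge0 (ltW hp0) he0) (ltW htp).
have am_ge0 l : 0 <= (\row_l alpham c p eta taup (g l)) 0 l by rewrite mxE ltW.
have am_neq0 l : (\row_l alpham c p eta taup (g l)) 0 l != 0 by rewrite mxE gt_eqF.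
rewrite /Tbar (Lbarm_conj n_gt0 hc hdm hVorth hVspan hVsupp).
rewrite (Lbarp_conj n_gt0 hc hdp hVorth hVspan hVsupp).
rewrite (invsqrtmx_sandwich_block _ _ WTW WWT (Cm_sym n_gt0 _) Cm_psd Cm_unit
          (tr_diag_mx _) (psdmx_diag am_ge0) (unitmx_diag am_neq0)).
rewrite (invsqrtmx_diag_sandwich _ (fun l => am_gt0 (g l))) hdec.
exact: row_mx_conj_block_diag.
Qed.
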